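(* Let $n\ge2$, $C>0$, $\lambda>0$, and $$0<R<\min\Big\{\frac{x_1}{\lambda},\ \sqrt{\tfrac38(3n-5)(2n-3)^3}\Big\}.$$ Then $u:=u^*-v$ satisfies $$u_t\le\Delta u+uu_r^3\qquad\text{in }(B_R\setminus\{0\})\times(0,\infty).$$
   Context: $B_R=\{x\in\mathbb R^n:|x|<R\}$; radial functions are written in $r=|x|$, subscript $r$ is the radial derivative. $\alpha:=\sqrt[3]{9n-15}$, $u^*(r):=-\alpha r^{1/3}$, $\nu:=\tfrac16\sqrt{36n^2-96n+61}$, $J_\nu$ is the Bessel function of the first kind of order $\nu$, and $v(r,t):=Ce^{-\lambda^2t}r^{n-\frac32}J_\nu(\lambda r)$. $x_0>0$ and $x_1\in(0,x_0)$ denote the first positive roots of $J_\nu$ and of $J_\nu'$, respectively. *)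

From Stdlib Require Import Arith Factorial Reals Lra ClassicalEpsilon.
Open Scope R_scope.

(* The limit of a real sequence (chosen classically; meaningful when it converges). *)
Definition lim_seq (u : nat -> R) : R :=
  epsilon (inhabits 0) (fun l => Un_cv u l).

Definition Gamma (z : R) : R :=
  lim_seq (fun k => INR (fact k) * Rpower (INR k) z
                    / prod_f_R0 (fun j => z + INR j) k).

Definition BesselJ (nu x : R) : R :=
  lim_seq (fun N => sum_f_R0 (fun m =>
     (-1) ^ m / (INR (fact m) * Gamma (INR m + nu + 1))
       * Rpower (x / 2) (2 * INR m + nu)) N).

Definition alpha (n : nat) : R := Rpower (9 * INR n - 15) (1/3).
Definition nu (n : nat) : R := / 6 * sqrt (36 * (INR n)^2 - 96 * INR n + 61).

Definition ustar (n : nat) (r : R) : R := - alpha n * Rpower r (1/3).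

Definition vfun (n : nat) (C lam : R) (r t : R) : R :=
  C * exp (- lam ^ 2 * t) * Rpower r (INR n - 3/2) * BesselJ (nu n) (lam * r).

Definition ufun (n : nat) (C lam : R) (r t : R) : R :=
  ustar n r - vfun n C lam r t.

(* The profile u* = -alpha r^(1/3) is a stationary solution of
   u_t = Delta u + u u_r^3, and v = C e^(-lam^2 t) r^(n-3/2) J_nu(lam r) solves the
   linearisation of that equation at u*, because r^(n-3/2) J_nu(lam r) satisfies the radial
   Bessel equation phi'' + (4-2n)/r phi' - (3n-5)/(9 r^2) phi = -lam^2 phi.  Hence only the
   terms of u u_r^3 of order at least two in v survive, and each of them has the right sign
   as soon as u*, u*_r, -v and -v_r are all negative.  For the last two, J_nu' > 0 on (0, x_1)
   because it is positive near 0 and x_1 is its first zero; hence J_nu > 0 there as well.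
   J_nu is handled through J_nu(x) = (x/2)^nu f(x^2/4), with f an entire power series solving
   y f'' + (nu+1) f' + f = 0; its coefficients need Gamma(z+1) = z Gamma(z) for the Gauss
   product defining Gamma. *)

From Stdlib Require Import Factorial Reals Lra Lia ClassicalEpsilon.
From Coquelicot Require Import Coquelicot.
Open Scope R_scope.

Lemma Rpower_pos (x y : R) : 0 < Rpower x y.
Proof. apply exp_pos. Qed.

Lemma Rpower_sub_1 (x y : R) : 0 < x -> Rpower x (y - 1) = Rpower x y / x.
Proof. intros Hx. unfold Rminus. rewrite Rpower_plus, Rpower_Ropp, Rpower_1 by exact Hx. reflexivity. Qed.

Lemma exp_le_exp (x y : R) : x <= y -> exp x <= exp y.
Proof. intros [Hlt|Heq]; [left; now apply exp_increasing|right; now rewrite Heq]. Qed.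

Lemma ln_le_sub_1 (y : R) : 0 < y -> ln y <= y - 1.
Proof. intros Hy. pose proof (exp_ineq1_le (ln y)) as H. rewrite exp_ln in H; lra. Qed.

Lemma ln_1_plus_bounds (x : R) : 0 < x -> x / (1 + x) <= ln (1 + x) <= x.
Proof.
  intros Hx. split.
  - pose proof (ln_le_sub_1 (/ (1 + x)) ltac:(apply Rinv_0_lt_compat; lra)) as H.
    rewrite ln_Rinv in H by lra.
    replace (/ (1 + x) - 1) with (- (x / (1 + x))) in H by (field; lra). lra.
  - pose proof (ln_le_sub_1 (1 + x) ltac:(lra)). lra.
Qed.

Lemma lim_seq_of_is_lim_seq (u : nat -> R) (l : R) : is_lim_seq u l -> lim_seq u = l.
Proof.
  intros Hl. apply is_lim_seq_Reals in Hl. unfold lim_seq.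
  apply (UL_sequence u); [|exact Hl].
  apply epsilon_spec. now exists l.
Qed.

(** * Gamma as the limit of Gauss' product *)

(* The k = 0 term is junk ([Rpower 0 z = 1]), so all estimates start at k = 1. *)
Definition gauss_seq (z : R) (k : nat) : R :=
  INR (fact k) * Rpower (INR k) z / prod_f_R0 (fun j => z + INR j) k.

Definition gauss_ratio (z : R) (k : nat) : R :=
  (INR k + 1) / (z + INR k + 1) * Rpower (1 + / INR k) z.

Lemma pochhammer_pos (z : R) (k : nat) : 0 < z -> 0 < prod_f_R0 (fun j => z + INR j) k.
Proof.
  intros Hz. induction k as [|k IH]; cbn [prod_f_R0]; [simpl; lra|].
  apply Rmult_lt_0_compat; [exact IH|]. pose proof (pos_INR (S k)). lra.
Qed.

Lemma gauss_seq_pos (z : R) (k : nat) : 0 < z -> 0 < gauss_seq z k.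
Proof.
  intros Hz. apply Rdiv_lt_0_compat; [|now apply pochhammer_pos].
  apply Rmult_lt_0_compat; [apply INR_fact_lt_0|apply Rpower_pos].
Qed.

Lemma gauss_seq_succ (z : R) (k : nat) : 0 < z -> (1 <= k)%nat ->
  gauss_seq z (S k) = gauss_seq z k * gauss_ratio z k.
Proof.
  intros Hz Hk. apply le_INR in Hk. simpl in Hk.
  pose proof (pochhammer_pos z k Hz). pose proof (INR_fact_lt_0 k).
  unfold gauss_seq, gauss_ratio. cbn [prod_f_R0].
  assert (Hpow : Rpower (INR k + 1) z = Rpower (INR k) z * Rpower (1 + / INR k) z).
  { rewrite Rpower_mult_distr; [f_equal; field|..]; try lra.
    pose proof (Rinv_0_lt_compat (INR k)). lra. }
  rewrite fact_simpl, mult_INR, S_INR, Hpow. field. lra.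
Qed.

Lemma gauss_ratio_ge_1 (z : R) (k : nat) : 0 < z -> (1 <= k)%nat -> 1 <= gauss_ratio z k.
Proof.
  intros Hz Hk. apply le_INR in Hk. simpl in Hk.
  destruct (ln_1_plus_bounds (/ INR k)) as [Hln _]; [apply Rinv_0_lt_compat; lra|].
  replace (/ INR k / (1 + / INR k)) with (/ (INR k + 1)) in Hln by (field; lra).
  assert (Hpow : 1 + z / (INR k + 1) <= Rpower (1 + / INR k) z).
  { eapply Rle_trans; [|apply exp_ineq1_le]. unfold Rdiv.
    apply Rplus_le_compat_l, Rmult_le_compat_l; lra. }
  unfold gauss_ratio.
  replace 1 with ((INR k + 1) / (z + INR k + 1) * (1 + z / (INR k + 1))) at 1 by (field; lra).
  apply Rmult_le_compat_l; [apply Rlt_le, Rdiv_lt_0_compat|]; lra.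
Qed.

Lemma gauss_ratio_le_exp (z : R) (k : nat) : 0 < z -> (1 <= k)%nat ->
  gauss_ratio z k <= exp (z * (1 + z) * (/ INR k - / (INR k + 1))).
Proof.
  intros Hz Hk. apply le_INR in Hk. simpl in Hk.
  destruct (ln_1_plus_bounds (/ INR k)) as [_ Hln]; [apply Rinv_0_lt_compat; lra|].
  assert (Hfrac : (INR k + 1) / (z + INR k + 1) <= exp (- (z / (z + INR k + 1)))).
  { eapply Rle_trans; [|apply exp_ineq1_le]. right. field. lra. }
  assert (Hpow : Rpower (1 + / INR k) z <= exp (z / INR k)).
  { apply exp_le_exp. apply Rmult_le_compat_l; lra. }
  eapply Rle_trans.
  { apply Rmult_le_compat; [apply Rlt_le, Rdiv_lt_0_compat; lra|apply Rlt_le, Rpower_pos|exact Hfrac|exact Hpow]. }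
  rewrite <- exp_plus. apply exp_le_exp.
  replace (- (z / (z + INR k + 1)) + z / INR k) with (z * (1 + z) / (INR k * (z + INR k + 1))) by (field; lra).
  replace (z * (1 + z) * (/ INR k - / (INR k + 1))) with (z * (1 + z) / (INR k * (INR k + 1))) by (field; lra).
  unfold Rdiv. apply Rmult_le_compat_l; [nra|]. apply Rinv_le_contravar; nra.
Qed.

Lemma gauss_seq_incr (z : R) (k : nat) : 0 < z -> gauss_seq z (S k) <= gauss_seq z (S (S k)).
Proof.
  intros Hz. rewrite (gauss_seq_succ z (S k)) by (lra || lia).
  pose proof (gauss_ratio_ge_1 z (S k) Hz ltac:(lia)). pose proof (gauss_seq_pos z (S k) Hz). nra.
Qed.

Lemma gauss_seq_le (z : R) (k : nat) : 0 < z ->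
  gauss_seq z (S k) <= gauss_seq z 1 * exp (z * (1 + z) * (1 - / (INR k + 1))).
Proof.
  intros Hz. induction k as [|k IH].
  - replace (1 - / (INR 0 + 1)) with 0 by (simpl; field). rewrite Rmult_0_r, exp_0. lra.
  - rewrite gauss_seq_succ by (lra || lia).
    pose proof (gauss_ratio_le_exp z (S k) Hz ltac:(lia)).
    pose proof (gauss_ratio_ge_1 z (S k) Hz ltac:(lia)).
    pose proof (gauss_seq_pos z (S k) Hz).
    eapply Rle_trans; [apply Rmult_le_compat; [lra|lra|exact IH|eassumption]|].
    rewrite Rmult_assoc, <- exp_plus, !S_INR. right. do 2 f_equal.
    pose proof (pos_INR k). field. lra.
Qed.

Lemma is_lim_seq_gauss (z : R) : 0 < z -> is_lim_seq (gauss_seq z) (Gamma z).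
Proof.
  intros Hz.
  assert (Hex : ex_finite_lim_seq (fun k => gauss_seq z (S k))).
  { apply ex_finite_lim_seq_incr with (gauss_seq z 1 * exp (z * (1 + z))).
    - intros k. now apply gauss_seq_incr.
    - intros k. eapply Rle_trans; [now apply gauss_seq_le|].
      apply Rmult_le_compat_l; [apply Rlt_le, gauss_seq_pos; lra|].
      apply exp_le_exp. pose proof (pos_INR k).
      pose proof (Rinv_0_lt_compat (INR k + 1) ltac:(lra)). nra. }
  destruct Hex as [l Hl]. apply is_lim_seq_incr_1 in Hl.
  unfold Gamma. fold (gauss_seq z). now rewrite (lim_seq_of_is_lim_seq _ _ Hl).
Qed.

Lemma Gamma_pos (z : R) : 0 < z -> 0 < Gamma z.
Proof.
  intros Hz.
  pose proof (proj1 (is_lim_seq_incr_1 _ _) (is_lim_seq_gauss z Hz)) as Hl.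
  pose proof (is_lim_seq_incr_compare _ _ Hl (fun k => gauss_seq_incr z k Hz) 0).
  pose proof (gauss_seq_pos z 1 Hz). lra.
Qed.

Lemma pochhammer_shift (z : R) (k : nat) :
  prod_f_R0 (fun j => z + INR j) k * (z + 1 + INR k) = z * prod_f_R0 (fun j => z + 1 + INR j) k.
Proof.
  induction k as [|k IH]; cbn [prod_f_R0]; [simpl; ring|].
  rewrite <- Rmult_assoc, <- IH, S_INR. ring.
Qed.

Lemma gauss_seq_shift (z : R) (k : nat) : 0 < z -> (1 <= k)%nat ->
  gauss_seq (z + 1) k = gauss_seq z k * (z * (INR k / (z + 1 + INR k))).
Proof.
  intros Hz Hk. apply le_INR in Hk. simpl in Hk.
  pose proof (pochhammer_pos z k Hz). pose proof (pochhammer_pos (z + 1) k ltac:(lra)).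
  pose proof (pochhammer_shift z k) as Hshift.
  unfold gauss_seq. rewrite Rpower_plus, Rpower_1 by lra.
  replace (prod_f_R0 (fun j => z + 1 + INR j) k)
    with (prod_f_R0 (fun j => z + INR j) k * (z + 1 + INR k) / z) by (rewrite Hshift; field; lra).
  field. lra.
Qed.

Lemma Gamma_succ (z : R) : 0 < z -> Gamma (z + 1) = z * Gamma z.
Proof.
  intros Hz.
  assert (Hfrac : is_lim_seq (fun k => INR k / (z + 1 + INR k)) 1).
  { apply is_lim_seq_ext_loc with (fun k => 1 - (z + 1) * / (z + 1 + INR k)).
    - exists 1%nat. intros k Hk. pose proof (pos_INR k). field. lra.
    - replace (Finite 1) with (Finite (1 - (z + 1) * 0)) by (f_equal; ring).
      apply is_lim_seq_minus', is_lim_seq_mult'; try apply is_lim_seq_const.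
      replace (Finite 0) with (Rbar_inv p_infty) by reflexivity.
      apply is_lim_seq_inv; [|discriminate].
      eapply is_lim_seq_plus; [apply is_lim_seq_const|apply is_lim_seq_INR|reflexivity]. }
  assert (Hlim : is_lim_seq (gauss_seq (z + 1)) (Gamma z * (z * 1))).
  { eapply is_lim_seq_ext_loc.
    - exists 1%nat. intros k Hk. symmetry. now apply gauss_seq_shift.
    - apply is_lim_seq_mult'; [now apply is_lim_seq_gauss|].
      apply is_lim_seq_mult'; [apply is_lim_seq_const|exact Hfrac]. }
  pose proof (is_lim_seq_unique _ _ Hlim) as H1.
  rewrite (is_lim_seq_unique _ _ (is_lim_seq_gauss (z + 1) ltac:(lra))) in H1.
  injection H1. intros ->. ring.
Qed.

(** * The entire part of J_nu *)

Definition bessel_coef (nu : R) (m : nat) : R :=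
  (-1) ^ m / (INR (fact m) * Gamma (INR m + nu + 1)).

Definition bessel_series (nu : R) (k : nat) : R -> R :=
  PSeries (Nat.iter k PS_derive (bessel_coef nu)).

Section BesselSeries.

Variable nu : R.
Hypothesis nu_gt_m1 : -1 < nu.

Lemma Gamma_bessel_pos (m : nat) : 0 < Gamma (INR m + nu + 1).
Proof. apply Gamma_pos. pose proof (pos_INR m). lra. Qed.

Lemma bessel_coef_succ (m : nat) :
  bessel_coef nu (S m) = - bessel_coef nu m / ((INR m + 1) * (INR m + 1 + nu)).
Proof.
  unfold bessel_coef. rewrite fact_simpl, mult_INR, S_INR.
  replace (INR m + 1 + nu + 1) with ((INR m + nu + 1) + 1) by ring.
  pose proof (Gamma_bessel_pos m). pose proof (INR_fact_lt_0 m). pose proof (pos_INR m).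
  rewrite Gamma_succ by lra. simpl pow. field. repeat split; lra.
Qed.

Lemma bessel_coef_neq_0 (m : nat) : bessel_coef nu m <> 0.
Proof.
  unfold bessel_coef. pose proof (Gamma_bessel_pos m). pose proof (INR_fact_lt_0 m).
  apply Rmult_integral_contrapositive. split; [apply pow_nonzero; lra|].
  apply Rinv_neq_0_compat. apply Rgt_not_eq, Rmult_gt_0_compat; lra.
Qed.

Lemma bessel_coef_0_pos : 0 < bessel_coef nu 0.
Proof.
  unfold bessel_coef. apply Rdiv_lt_0_compat; [simpl; lra|].
  apply Rmult_lt_0_compat; [apply INR_fact_lt_0|apply Gamma_bessel_pos].
Qed.

Lemma CV_radius_bessel_coef (k : nat) :
  CV_radius (Nat.iter k PS_derive (bessel_coef nu)) = p_infty.
Proof.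
  induction k as [|k IH]; simpl; [|now rewrite CV_radius_derive].
  apply CV_radius_infinite_DAlembert; [apply bessel_coef_neq_0|].
  apply is_lim_seq_ext with (fun m => / ((INR m + 1) * (INR m + (1 + nu)))).
  - intros m. pose proof (pos_INR m). pose proof (bessel_coef_neq_0 m).
    rewrite bessel_coef_succ.
    replace (- bessel_coef nu m / ((INR m + 1) * (INR m + 1 + nu)) / bessel_coef nu m)
      with (- / ((INR m + 1) * (INR m + (1 + nu)))) by (field; repeat split; lra).
    rewrite Rabs_Ropp, Rabs_pos_eq; [reflexivity|].
    apply Rlt_le, Rinv_0_lt_compat. nra.
  - replace (Finite 0) with (Rbar_inv p_infty) by reflexivity.
    apply is_lim_seq_inv; [|discriminate].
    apply is_lim_seq_mult with p_infty p_infty;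
      [apply (is_lim_seq_plus INR (fun _ => 1) p_infty 1)
      |apply (is_lim_seq_plus INR (fun _ => 1 + nu) p_infty (1 + nu))
      |reflexivity];
      solve [apply is_lim_seq_INR|apply is_lim_seq_const|reflexivity].
Qed.

Lemma is_pseries_bessel (k : nat) (y : R) :
  is_pseries (Nat.iter k PS_derive (bessel_coef nu)) y (bessel_series nu k y).
Proof.
  apply PSeries_correct, CV_radius_inside. now rewrite CV_radius_bessel_coef.
Qed.

Lemma is_derive_bessel_series (k : nat) (y : R) :
  is_derive (bessel_series nu k) y (bessel_series nu (S k) y).
Proof. apply is_derive_PSeries. now rewrite CV_radius_bessel_coef. Qed.

Lemma bessel_series_ode (y : R) :
  y * bessel_series nu 2 y + (nu + 1) * bessel_series nu 1 y + bessel_series nu 0 y = 0.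
Proof.
  pose proof (is_pseries_incr_1 _ _ _ (is_pseries_bessel 2 y)) as H2.
  pose proof (is_pseries_scal (nu + 1) _ _ _ (Rmult_comm _ _) (is_pseries_bessel 1 y)) as H1.
  pose proof (is_pseries_plus _ _ _ _ _ (is_pseries_plus _ _ _ _ _ H2 H1) (is_pseries_bessel 0 y)) as H.
  apply is_pseries_unique in H. etransitivity; [exact (eq_sym H)|].
  rewrite <- (PSeries_const_0 y). apply PSeries_ext. intros k.
  unfold PS_plus, PS_scal, PS_incr_1, PS_derive, Nat.iter, plus, scal, mult, zero.
  cbn -[INR bessel_coef].
  destruct k as [|j].
  - rewrite bessel_coef_succ. simpl. field. lra.
  - rewrite (bessel_coef_succ (S j)), !S_INR. pose proof (pos_INR j). field. lra.
Qed.

Lemma BesselJ_scaled (a x : R) : 0 < a -> 0 < x ->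
  BesselJ nu (a * x) = Rpower (a / 2) nu * (Rpower x nu * bessel_series nu 0 (a ^ 2 / 4 * x ^ 2)).
Proof.
  intros Ha Hx. set (y := a ^ 2 / 4 * x ^ 2).
  assert (Hpow : forall m, Rpower (a * x / 2) (2 * INR m + nu) = Rpower (a * x / 2) nu * y ^ m).
  { intros m. replace (2 * INR m) with (INR (2 * m)) by (rewrite mult_INR; reflexivity).
    rewrite Rpower_plus, Rpower_pow, pow_mult by (apply Rdiv_lt_0_compat; nra).
    replace ((a * x / 2) ^ 2) with y by (unfold y; field). ring. }
  assert (Hs : is_lim_seq (sum_n (fun k => scal (pow_n y k) (bessel_coef nu k))) (bessel_series nu 0 y))
    by apply (is_pseries_bessel 0 y).
  apply (is_lim_seq_scal_l _ (Rpower (a * x / 2) nu)) in Hs.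
  rewrite <- Rmult_assoc, Rpower_mult_distr by lra.
  replace (a / 2 * x) with (a * x / 2) by field.
  unfold BesselJ. apply lim_seq_of_is_lim_seq.
  eapply is_lim_seq_ext; [|exact Hs]. intros N. simpl.
  rewrite sum_n_Reals, scal_sum. apply sum_eq. intros m _.
  rewrite Hpow, pow_n_pow. unfold scal; simpl; unfold mult; simpl.
  fold (bessel_coef nu m). ring.
Qed.

End BesselSeries.

Definition power_sq_deriv (b : R) (g g' : R -> R) (y : R) : R := b * g y + 2 * y * g' y.

Lemma is_derive_power_sq (g g' : R -> R) (b c s : R) : 0 < s ->
  (forall y, is_derive g y (g' y)) ->
  is_derive (fun s => Rpower s b * g (c * s ^ 2)) s
    (Rpower s (b - 1) * power_sq_deriv b g g' (c * s ^ 2)).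
Proof.
  intros Hs Hg.
  assert (Hd : is_derive (fun s => Rpower s b * g (c * s ^ 2)) s
    (b * Rpower s (b - 1) * g (c * s ^ 2) + Rpower s b * (2 * c * s * g' (c * s ^ 2)))).
  { apply (is_derive_mult (fun s => Rpower s b) (fun s => g (c * s ^ 2))).
    - apply is_derive_Reals, derivable_pt_lim_power, Hs.
    - apply (is_derive_comp g (fun s => c * s ^ 2)); [apply Hg|].
      auto_derive; [exact I|ring].
    - intros; apply Rmult_comm. }
  replace (Rpower s (b - 1) * _) with
    (b * Rpower s (b - 1) * g (c * s ^ 2) + Rpower s b * (2 * c * s * g' (c * s ^ 2))); [exact Hd|].
  unfold power_sq_deriv. rewrite Rpower_sub_1 by exact Hs. field. lra.
Qed.

Lemma is_derive_power_sq_deriv (g g' g'' : R -> R) (b y : R) :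
  (forall y, is_derive g y (g' y)) -> (forall y, is_derive g' y (g'' y)) ->
  is_derive (power_sq_deriv b g g') y (power_sq_deriv (b + 2) g' g'' y).
Proof.
  intros Hg Hg'. unfold power_sq_deriv.
  assert (Hd : is_derive (fun y => b * g y + 2 * y * g' y) y
    (b * g' y + ((2 * 1) * g' y + 2 * y * g'' y))).
  { apply (is_derive_plus (fun y => b * g y) (fun y => 2 * y * g' y)).
    - apply is_derive_scal, Hg.
    - apply (is_derive_mult (fun y => 2 * y) g'); [|apply Hg'|intros; apply Rmult_comm].
      auto_derive; [exact I|ring]. }
  replace ((b + 2) * g' y + 2 * y * g'' y) with (b * g' y + ((2 * 1) * g' y + 2 * y * g'' y)) by ring.
  exact Hd.
Qed.

(** * Sign of J_nu before its first critical point *)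

Lemma continuity_pt_near (f : R -> R) (x0 eps : R) : continuity_pt f x0 -> 0 < eps ->
  exists d, 0 < d /\ forall x, Rabs (x - x0) < d -> Rabs (f x - f x0) < eps.
Proof.
  intros Hc Heps. destruct (Hc eps Heps) as [d [Hd Hnear]].
  exists d. split; [exact Hd|]. intros x Hx.
  destruct (Req_dec x x0) as [Heq|Hne].
  - rewrite Heq, Rminus_eq_0, Rabs_R0. exact Heps.
  - apply (Hnear x). repeat split; auto.
Qed.

Lemma first_root (h : R -> R) (a b : R) : a < b -> (forall x, continuity_pt h x) ->
  0 < h a -> h b <= 0 ->
  exists m, a < m <= b /\ h m = 0 /\ forall z, a <= z < m -> 0 < h z.
Proof.
  intros Hab Hc Ha Hb.
  set (E := fun y => a <= y <= b /\ forall z, a <= z <= y -> 0 < h z).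
  destruct (completeness E) as [m [Hub Hlub]].
  { exists b. intros y [Hy _]. lra. }
  { exists a. split; [lra|]. intros z Hz. replace z with a by lra. exact Ha. }
  assert (Ham : a <= m) by (apply Hub; split; [lra|]; intros z Hz; replace z with a by lra; exact Ha).
  assert (Hmb : m <= b) by (apply Hlub; intros y [Hy _]; lra).
  assert (Hbelow : forall z, a <= z < m -> 0 < h z).
  { intros z Hz. apply NNPP. intros Hnot.
    assert (m <= z); [|lra].
    apply Hlub. intros y [Hy Hpos]. destruct (Rle_lt_dec y z) as [|Hzy]; [assumption|].
    exfalso. apply Hnot, Hpos. lra. }
  assert (Hm : h m = 0).
  { destruct (Req_dec (h m) 0) as [|Hne]; [assumption|exfalso].
    destruct (continuity_pt_near h m (Rabs (h m)) (Hc m)) as [d [Hd Hnear]].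
    { now apply Rabs_pos_lt. }
    destruct (Rtotal_order (h m) 0) as [Hneg|[Hzero|Hpos]]; [|contradiction|].
    - destruct (Req_dec m a) as [Hma|Hma]; [rewrite Hma in Hneg; lra|].
      set (z := Rmax (m - d / 2) a).
      assert (Hz : a <= z < m) by (unfold z; split; [apply Rmax_r|apply Rmax_lub_lt]; lra).
      assert (Hzm : Rabs (z - m) < d) by (rewrite Rabs_left by lra; unfold z; pose proof (Rmax_l (m - d / 2) a); lra).
      apply Hnear, Rabs_def2 in Hzm. rewrite Rabs_left in Hzm by exact Hneg.
      specialize (Hbelow z Hz). lra.
    - assert (Hmb' : m < b) by (destruct (Req_dec m b) as [Heq|]; [rewrite Heq in Hpos; lra|lra]).
      assert (Hy : E (Rmin (m + d / 2) b)).
      { split; [split; [apply Rmin_glb|apply Rmin_r]; lra|].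
        intros z Hz. destruct (Rlt_le_dec z m) as [Hzm|Hzm]; [apply Hbelow; lra|].
        pose proof (Rmin_l (m + d / 2) b).
        assert (Habs : Rabs (z - m) < d) by (rewrite Rabs_pos_eq; lra).
        apply Hnear, Rabs_def2 in Habs. rewrite Rabs_pos_eq in Habs; lra. }
      apply Hub in Hy. assert (m < Rmin (m + d / 2) b) by (apply Rmin_glb_lt; lra). lra. }
  exists m. split; [|split; assumption].
  split; [|exact Hmb]. destruct (Req_dec a m) as [Heq|]; [rewrite <- Heq in Hm; lra|lra].
Qed.

Section BesselSign.

Variable nu : R.
Hypothesis nu_pos : 0 < nu.

Let bessel_core (x : R) : R := bessel_series nu 0 (/ 4 * x ^ 2).
Let bessel_slope (x : R) : R := power_sq_deriv nu (bessel_series nu 0) (bessel_series nu 1) (/ 4 * x ^ 2).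

Lemma BesselJ_eq_core (x : R) : 0 < x -> BesselJ nu x = Rpower (/ 2) nu * (Rpower x nu * bessel_core x).
Proof.
  intros Hx. rewrite <- (Rmult_1_l x) at 1. rewrite BesselJ_scaled by lra.
  unfold bessel_core. replace (1 / 2) with (/ 2) by field. do 3 f_equal. field.
Qed.

Lemma is_derive_BesselJ (x : R) : 0 < x ->
  is_derive (BesselJ nu) x (Rpower (/ 2) nu * (Rpower x (nu - 1) * bessel_slope x)).
Proof.
  intros Hx.
  apply (is_derive_ext_loc (fun x => Rpower (/ 2) nu * (Rpower x nu * bessel_core x))).
  { apply (locally_interval _ x 0 p_infty); [exact Hx|exact I|].
    intros y Hy _. symmetry. now apply BesselJ_eq_core. }
  apply is_derive_scal, is_derive_power_sq; [exact Hx|].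
  intros y. apply is_derive_bessel_series. lra.
Qed.

Lemma continuity_pt_bessel_core (x : R) : continuity_pt bessel_core x.
Proof.
  apply derivable_continuous_pt. eexists. apply is_derive_Reals.
  apply (is_derive_comp (bessel_series nu 0) (fun x => / 4 * x ^ 2)).
  - apply is_derive_bessel_series. lra.
  - auto_derive; [exact I|reflexivity].
Qed.

Lemma continuity_pt_bessel_slope (x : R) : continuity_pt bessel_slope x.
Proof.
  apply derivable_continuous_pt. eexists. apply is_derive_Reals.
  apply (is_derive_comp (power_sq_deriv nu _ _) (fun x => / 4 * x ^ 2)).
  - apply is_derive_power_sq_deriv with (g'' := bessel_series nu 2);
      intros; apply is_derive_bessel_series; lra.
  - auto_derive; [exact I|reflexivity].
Qed.

Lemma bessel_core_0_pos : 0 < bessel_core 0.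
Proof.
  unfold bessel_core. replace (/ 4 * 0 ^ 2) with 0 by ring.
  unfold bessel_series. rewrite PSeries_0. apply bessel_coef_0_pos. lra.
Qed.

Lemma bessel_slope_0_pos : 0 < bessel_slope 0.
Proof.
  pose proof bessel_core_0_pos. unfold bessel_slope, power_sq_deriv. unfold bessel_core in H.
  replace (/ 4 * 0 ^ 2) with 0 in * by ring. nra.
Qed.

Lemma bessel_slope_pos_before_first_critical (X : R) :
  (forall x1, 0 < x1 -> derivable_pt_lim (BesselJ nu) x1 0 ->
     (forall y, 0 < y < x1 -> ~ derivable_pt_lim (BesselJ nu) y 0) -> X < x1) ->
  forall x, 0 < x < X -> 0 < bessel_slope x.
Proof.
  intros Hfirst x Hx. apply Rnot_le_lt. intros Hle.
  (* The first zero of the slope is a first critical point of J_nu, yet it is below X. *)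
  destruct (first_root bessel_slope 0 x) as [m [Hm [Hroot Hbelow]]];
    [lra|apply continuity_pt_bessel_slope|apply bessel_slope_0_pos|exact Hle|].
  assert (X < m); [|lra].
  apply Hfirst; [lra| |].
  - apply is_derive_Reals. replace 0 with (Rpower (/ 2) nu * (Rpower m (nu - 1) * bessel_slope m))
      by (rewrite Hroot; ring).
    apply is_derive_BesselJ. lra.
  - intros y Hy Hcrit. apply is_derive_Reals, is_derive_unique in Hcrit.
    rewrite (is_derive_unique _ _ _ (is_derive_BesselJ y ltac:(lra))) in Hcrit.
    pose proof (Hbelow y ltac:(lra)). pose proof (Rpower_pos (/ 2) nu). pose proof (Rpower_pos y (nu - 1)).
    assert (0 < Rpower (/ 2) nu * (Rpower y (nu - 1) * bessel_slope y))
      by (repeat apply Rmult_lt_0_compat; lra).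
    lra.
Qed.

Lemma bessel_core_pos_of_slope_pos (X : R) :
  (forall x, 0 < x < X -> 0 < bessel_slope x) -> forall x, 0 < x < X -> 0 < bessel_core x.
Proof.
  intros Hslope x Hx. apply Rnot_le_lt. intros Hle.
  (* At a first zero m of the core, J_nu(m) = 0 < J_nu(m/2), although J_nu increases on [m/2, m]. *)
  destruct (first_root bessel_core 0 x) as [m [Hm [Hroot Hbelow]]];
    [lra|apply continuity_pt_bessel_core|apply bessel_core_0_pos|exact Hle|].
  destruct (MVT_cor2 (BesselJ nu) (fun x => Rpower (/ 2) nu * (Rpower x (nu - 1) * bessel_slope x)) (m / 2) m)
    as [c [Hmvt Hc]]; [lra| |].
  { intros c Hc. apply is_derive_Reals, is_derive_BesselJ. lra. }
  rewrite !BesselJ_eq_core, Hroot in Hmvt by lra.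
  pose proof (Hbelow (m / 2) ltac:(lra)). pose proof (Hslope c ltac:(lra)).
  pose proof (Rpower_pos (/ 2) nu). pose proof (Rpower_pos (m / 2) nu). pose proof (Rpower_pos c (nu - 1)).
  assert (0 < Rpower (/ 2) nu * (Rpower c (nu - 1) * bessel_slope c) * (m - m / 2))
    by (repeat apply Rmult_lt_0_compat; lra).
  assert (0 < Rpower (/ 2) nu * (Rpower (m / 2) nu * bessel_core (m / 2)))
    by (repeat apply Rmult_lt_0_compat; lra).
  nra.
Qed.

End BesselSign.

(** * The supersolution inequality *)

Lemma perturbation_supersolution (N r a p p' bb q q' f : R) :
  a < 0 -> p < 0 -> bb < 0 -> q < 0 ->
  p' + (N - 1) / r * p + a * p ^ 3 = 0 ->
  q' + (N - 1) / r * q + bb * p ^ 3 + 3 * a * p ^ 2 * q = f ->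
  f <= (p' + q') + (N - 1) / r * (p + q) + (a + bb) * (p + q) ^ 3.
Proof.
  intros Ha Hp Hbb Hq Hstat Hlin.
  assert (Hpq : 0 < p * q) by nra.
  assert (Hs1 : 3 * p * q ^ 2 + q ^ 3 < 0).
  { replace (3 * p * q ^ 2 + q ^ 3) with (q * (3 * (p * q) + q * q)) by ring. nra. }
  assert (Hs2 : 3 * p ^ 2 * q + 3 * p * q ^ 2 + q ^ 3 < 0).
  { replace (3 * p ^ 2 * q + 3 * p * q ^ 2 + q ^ 3) with (q * (3 * (p * p) + 3 * (p * q) + q * q)) by ring. nra. }
  assert (H1 : 0 <= a * (3 * p * q ^ 2 + q ^ 3)) by nra.
  assert (H2 : 0 <= bb * (3 * p ^ 2 * q + 3 * p * q ^ 2 + q ^ 3)) by nra.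
  rewrite <- Hlin.
  replace ((p' + q') + (N - 1) / r * (p + q) + (a + bb) * (p + q) ^ 3) with
    ((p' + (N - 1) / r * p + a * p ^ 3) + (q' + (N - 1) / r * q + bb * p ^ 3 + 3 * a * p ^ 2 * q)
     + a * (3 * p * q ^ 2 + q ^ 3) + bb * (3 * p ^ 2 * q + 3 * p * q ^ 2 + q ^ 3)) by ring.
  lra.
Qed.

Lemma Rpower_third_cube (x : R) : 0 < x -> Rpower x (1 / 3) ^ 3 = x.
Proof.
  intros Hx. rewrite <- Rpower_pow, Rpower_mult by apply Rpower_pos.
  replace (1 / 3 * INR 3) with 1 by (simpl; field). now apply Rpower_1.
Qed.

Lemma ustar_coefficients (N al w r : R) : 0 < r -> al ^ 3 = 9 * N - 15 -> w ^ 3 = r ->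
  let a := - al * w in
  let p := - al * (1 / 3 * (w / r)) in
  - al * (1 / 3 * ((1 / 3 - 1) * (w / r / r))) + (N - 1) / r * p + a * p ^ 3 = 0 /\
  p ^ 3 = - (3 * N - 5) / (9 * r ^ 2) /\
  3 * a * p ^ 2 = - (3 * N - 5) / r.
Proof.
  intros Hr Hal3 Hw3 a p.
  replace (a * p ^ 3) with (al * al ^ 3 * (w * w ^ 3) / (27 * r ^ 3)) by (unfold a, p; field; lra).
  replace (p ^ 3) with (- al ^ 3 * w ^ 3 / (27 * r ^ 3)) by (unfold p; field; lra).
  replace (3 * a * p ^ 2) with (- al ^ 3 * w ^ 3 / (3 * r ^ 2)) by (unfold a, p; field; lra).
  rewrite Hal3, Hw3. unfold p. repeat split; field; lra.
Qed.

Lemma alpha_spec (n : nat) : (2 <= n)%nat -> 0 < alpha n /\ alpha n ^ 3 = 9 * INR n - 15.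
Proof.
  intros Hn. apply le_INR in Hn. simpl in Hn.
  split; [apply Rpower_pos|]. apply Rpower_third_cube. lra.
Qed.

Lemma nu_spec (n : nat) : (2 <= n)%nat ->
  0 < nu n /\ (INR n - 3 / 2 + nu n) * (nu n - INR n + 3 / 2) = (3 * INR n - 5) / 9.
Proof.
  intros Hn. apply le_INR in Hn. simpl in Hn.
  assert (Hrad : 0 < 36 * INR n ^ 2 - 96 * INR n + 61) by nra.
  pose proof (sqrt_lt_R0 _ Hrad). pose proof (sqrt_sqrt _ (Rlt_le _ _ Hrad)).
  unfold nu. split; [lra|]. nra.
Qed.

Section RadialSolution.

Variables (n : nat) (C lam t : R).
Hypotheses (n_ge_2 : (2 <= n)%nat) (lam_pos : 0 < lam).

Let N : R := INR n.
Let b : R := N - 3 / 2 + nu n.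
Let c : R := lam ^ 2 / 4.
Let K : R := C * exp (- lam ^ 2 * t) * Rpower (lam / 2) (nu n).
Let f (k : nat) : R -> R := bessel_series (nu n) k.
Let G1 : R -> R := power_sq_deriv b (f 0) (f 1).
Let G2 : R -> R := power_sq_deriv (b - 1) G1 (power_sq_deriv (b + 2) (f 1) (f 2)).

Definition ufun_r (s : R) : R :=
  - alpha n * (1 / 3 * Rpower s (1 / 3 - 1)) - K * (Rpower s (b - 1) * G1 (c * s ^ 2)).

Definition ufun_rr (s : R) : R :=
  - alpha n * (1 / 3 * ((1 / 3 - 1) * Rpower s (1 / 3 - 1 - 1)))
  - K * (Rpower s (b - 1 - 1) * G2 (c * s ^ 2)).

Lemma nu_n_gt_m1 : -1 < nu n.
Proof. pose proof (nu_spec n n_ge_2). lra. Qed.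

Lemma vfun_profile (s : R) : 0 < s -> vfun n C lam s t = K * (Rpower s b * f 0 (c * s ^ 2)).
Proof.
  intros Hs. unfold vfun, K, b, c, f. rewrite BesselJ_scaled by (auto using nu_n_gt_m1).
  unfold Rminus. rewrite (Rpower_plus (N + - (3 / 2))). unfold N. ring.
Qed.

Lemma is_derive_ufun_space (s : R) : 0 < s -> is_derive (fun s => ufun n C lam s t) s (ufun_r s).
Proof.
  intros Hs.
  apply (is_derive_ext_loc (fun s => - alpha n * Rpower s (1 / 3) - K * (Rpower s b * f 0 (c * s ^ 2)))).
  { apply (locally_interval _ s 0 p_infty); [exact Hs|exact I|].
    intros y Hy _. unfold ufun, ustar. now rewrite vfun_profile. }
  unfold ufun_r.
  apply (is_derive_minus (fun s => - alpha n * Rpower s (1 / 3)) (fun s => K * (Rpower s b * f 0 (c * s ^ 2))));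
    apply is_derive_scal.
  - apply is_derive_Reals, derivable_pt_lim_power, Hs.
  - apply is_derive_power_sq; [exact Hs|]. intros y. apply is_derive_bessel_series, nu_n_gt_m1.
Qed.

Lemma is_derive_ufun_r (s : R) : 0 < s -> is_derive ufun_r s (ufun_rr s).
Proof.
  intros Hs. unfold ufun_r, ufun_rr.
  apply (is_derive_minus (fun s => - alpha n * (1 / 3 * Rpower s (1 / 3 - 1)))
           (fun s => K * (Rpower s (b - 1) * G1 (c * s ^ 2))));
    apply is_derive_scal.
  - apply is_derive_scal, is_derive_Reals, derivable_pt_lim_power, Hs.
  - apply is_derive_power_sq; [exact Hs|]. intros y.
    apply is_derive_power_sq_deriv; intros; apply is_derive_bessel_series, nu_n_gt_m1.
Qed.

Lemma is_derive_ufun_time (r : R) :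
  is_derive (fun t => ufun n C lam r t) t (lam ^ 2 * vfun n C lam r t).
Proof.
  unfold ufun, vfun.
  auto_derive; [exact I|].
  replace (- (lam * (lam * 1))) with (- lam ^ 2) by ring. ring.
Qed.

(* With phi s = s^b f (c s^2) one has phi' s = s^(b-1) G1 (c s^2) and
   phi'' s = s^(b-2) G2 (c s^2), so this is the radial Bessel equation for phi. *)
Lemma profile_ode (y : R) :
  G2 y + (4 - 2 * N) * G1 y - (3 * N - 5) / 9 * f 0 y = - 4 * y * f 0 y.
Proof.
  destruct (nu_spec n n_ge_2) as [_ Hnu].
  pose proof (bessel_series_ode (nu n) nu_n_gt_m1 y) as Hode.
  unfold G2, G1, power_sq_deriv.
  replace ((b - 1) * (b * f 0 y + 2 * y * f 1 y) + 2 * y * ((b + 2) * f 1 y + 2 * y * f 2 y)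
           + (4 - 2 * N) * (b * f 0 y + 2 * y * f 1 y) - (3 * N - 5) / 9 * f 0 y)
    with ((b * (nu n - N + 3 / 2) - (3 * N - 5) / 9) * f 0 y
          + 4 * y * (y * f 2 y + (nu n + 1) * f 1 y + f 0 y) - 4 * y * f 0 y)
    by (unfold b; field).
  unfold b, N, f. rewrite Hnu, Hode. ring.
Qed.

Lemma ufun_supersolution (r : R) : 0 < r -> 0 < C ->
  0 < f 0 (c * r ^ 2) -> 0 < power_sq_deriv (nu n) (f 0) (f 1) (c * r ^ 2) ->
  lam ^ 2 * vfun n C lam r t <= ufun_rr r + (N - 1) / r * ufun_r r + ufun n C lam r t * ufun_r r ^ 3.
Proof.
  intros Hr HC Hf0 Hslope.
  destruct (alpha_spec n n_ge_2) as [Hal Hal3].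
  assert (HN : 2 <= N) by (apply le_INR in n_ge_2; simpl in n_ge_2; unfold N; lra).
  set (w := Rpower r (1 / 3)). set (P := Rpower r b). set (y := c * r ^ 2) in *.
  destruct (ustar_coefficients N (alpha n) w r Hr Hal3 (Rpower_third_cube r Hr)) as [Hstat [Hp3 Hap2]].
  assert (HK : 0 < K) by (unfold K; pose proof (exp_pos (- lam ^ 2 * t)); pose proof (Rpower_pos (lam / 2) (nu n));
    repeat apply Rmult_lt_0_compat; lra).
  assert (Hw : 0 < w) by apply Rpower_pos. assert (HP : 0 < P) by apply Rpower_pos.
  assert (HG1 : 0 < G1 y).
  { replace (G1 y) with ((N - 3 / 2) * f 0 y + power_sq_deriv (nu n) (f 0) (f 1) y)
      by (unfold G1, power_sq_deriv, b; ring).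
    apply Rplus_lt_0_compat; [apply Rmult_lt_0_compat; lra|exact Hslope]. }
  unfold ufun_rr, ufun_r, ufun, ustar. rewrite vfun_profile by exact Hr.
  rewrite !Rpower_sub_1 by exact Hr. fold w P y.
  eapply Rle_trans; [apply (perturbation_supersolution N r (- alpha n * w) (- alpha n * (1 / 3 * (w / r)))
    (- alpha n * (1 / 3 * ((1 / 3 - 1) * (w / r / r)))) (- (K * (P * f 0 y))) (- (K * (P / r * G1 y)))
    (- (K * (P / r / r * G2 y))))|right; ring].
  - pose proof (Rmult_lt_0_compat _ _ Hal Hw). lra.
  - assert (0 < alpha n * (w / r)) by (apply Rmult_lt_0_compat; [|apply Rdiv_lt_0_compat]; lra). lra.
  - assert (0 < K * (P * f 0 y)) by (apply Rmult_lt_0_compat; [|apply Rmult_lt_0_compat]; lra). lra.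
  - assert (0 < K * (P / r * G1 y)) by
      (apply Rmult_lt_0_compat; [|apply Rmult_lt_0_compat; [apply Rdiv_lt_0_compat|]]; lra). lra.
  - exact Hstat.
  - rewrite Hp3, Hap2. pose proof (profile_ode y) as Hprof.
    replace (lam ^ 2) with (4 * c) by (unfold c; field).
    transitivity (- K * P / r ^ 2 * (G2 y + (4 - 2 * N) * G1 y - (3 * N - 5) / 9 * f 0 y)); [field; lra|].
    rewrite Hprof. unfold y. field. lra.
Qed.

End RadialSolution.

Theorem mainTheorem9 (n : nat) (C lam Rad : R) :
  (2 <= n)%nat -> 0 < C -> 0 < lam ->
  0 < Rad ->
  (* Rad < x1 / lam, where x1 is the first positive root of J_nu' *)
  (forall x1 : R, 0 < x1 ->
     derivable_pt_lim (BesselJ (nu n)) x1 0 ->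
     (forall y : R, 0 < y < x1 -> ~ derivable_pt_lim (BesselJ (nu n)) y 0) ->
     Rad < x1 / lam) ->
  Rad < sqrt (3 / 8 * (3 * INR n - 5) * (2 * INR n - 3) ^ 3) ->
  forall r t : R, 0 < r < Rad -> 0 < t ->
    exists (ur : R -> R) (urr ut : R),
      (forall s : R, 0 < s -> derivable_pt_lim (fun s' => ufun n C lam s' t) s (ur s)) /\
      derivable_pt_lim ur r urr /\
      derivable_pt_lim (fun t' => ufun n C lam r t') t ut /\
      ut <= urr + (INR n - 1) / r * ur r + ufun n C lam r t * (ur r) ^ 3.
Proof.
  intros Hn HC Hlam HRad Hx1 _ r t [Hr HrRad] Ht.
  destruct (nu_spec n Hn) as [Hnu _].
  assert (Hslopes : forall x, 0 < x < lam * Rad ->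
            0 < power_sq_deriv (nu n) (bessel_series (nu n) 0) (bessel_series (nu n) 1) (/ 4 * x ^ 2)).
  { apply bessel_slope_pos_before_first_critical; [exact Hnu|].
    intros x1 Hx1pos Hcrit Hfirst. specialize (Hx1 x1 Hx1pos Hcrit Hfirst).
    apply Rmult_lt_compat_l with (r := lam) in Hx1; [|exact Hlam].
    now replace (lam * (x1 / lam)) with x1 in Hx1 by (field; lra). }
  assert (Hlr : 0 < lam * r < lam * Rad) by (split; nra).
  pose proof (bessel_core_pos_of_slope_pos (nu n) Hnu (lam * Rad) Hslopes (lam * r) Hlr) as Hcore.
  cbv beta in Hcore.
  pose proof (Hslopes (lam * r) Hlr) as Hslope.
  replace (/ 4 * (lam * r) ^ 2) with (lam ^ 2 / 4 * r ^ 2) in Hcore, Hslope by field.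
  exists (ufun_r n C lam t), (ufun_rr n C lam t r), (lam ^ 2 * vfun n C lam r t).
  repeat split.
  - intros s Hs. now apply is_derive_Reals, is_derive_ufun_space.
  - now apply is_derive_Reals, is_derive_ufun_r.
  - apply is_derive_Reals, is_derive_ufun_time.
  - now apply ufun_supersolution.
Qed.
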